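(* For integers $1\le k<d$, the truncated binomial $P_{k;d}(x)=\sum_{j=0}^{k}\binom{d}{j}x^j$ has no multiple roots. *)

From mathcomp Require Import all_boot all_algebra all_field.
Set Implicit Arguments. Unset Strict Implicit. Unset Printing Implicit Defensive.
Import GRing.Theory Num.Theory.
Local Open Scope ring_scope.

Definition truncBinom (k d : nat) : {poly algC} :=
  \poly_(j < k.+1) ('C(d, j))%:R.

Definition multiple_root (p : {poly algC}) (z : algC) : Prop :=
  p != 0 /\ (('X - z%:P) ^+ 2 %| p).

From mathcomp Require Import all_boot all_algebra all_field.
Local Open Scope ring_scope.
Import GRing.Theory Num.Theory.

(* Write P for the truncated binomial. Absorption C(d,j+1)(j+1) = C(d,j)(d-j)
   gives the differential identity (X + 1) P' = d P - (d - k) C(d,k) X^k.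
   At a multiple root z both P and P' vanish, so (d - k) C(d,k) z^k = 0,
   forcing z = 0; but P(0) = 1. *)

Lemma sqr_dvdp_root_deriv (R : fieldType) (p : {poly R}) (z : R) :
  ('X - z%:P) ^+ 2 %| p -> root p z && root p^`() z.
Proof.
move=> /dvdpP [q ->]; have /eqP : root ('X - z%:P) z by rewrite root_XsubC.
move: ('X - z%:P) => t tz; rewrite derivM deriv_exp !rootE.
by rewrite !(hornerD, hornerM, hornerMn, horner_exp) tz expr0n !(mulr0, mul0rn, addr0) eqxx.
Qed.

Section TruncatedBinomial.

Variables (R : nzRingType) (k d : nat).

Let P : {poly R} := \poly_(j < k.+1) ('C(d, j))%:R.

Lemma horner0_truncBinom : P.[0] = 1.
Proof. by rewrite horner_coef0 coef_poly bin0. Qed.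

Lemma deriv_truncBinom : (k < d)%N ->
  ('X + 1) * P^`() = d%:R *: P - ((d - k) * 'C(d, k))%:R *: 'X^k.
Proof.
move=> ltkd; apply/polyP => i.
rewrite mulrDl mul1r coefD coefXM !coef_deriv coefB !coefZ coefXn !coef_poly.
case: i => [|i] /=.
  rewrite add0r bin0 mulr1 mulr1n ltnS.
  case: k ltkd => [|k'] _ /=.
  - by rewrite bin0 muln1 subn0 mulr1 subrr.
  - by rewrite mulr0 subr0 bin1.
rewrite !ltnS; case: (ltngtP i.+1 k) => [ltik | ltki | ->].
- rewrite mulr0 subr0 -!mulrnA -natrM -natrD.
  have leid : (i.+1 <= d)%N := leq_trans (ltnW ltik) (ltnW ltkd).
  by rewrite [('C(d, i.+2) * _)%N]mulnC mul_bin_left [('C(d, i.+1) * _)%N]mulnC -mulnDl subnKC.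
- by rewrite !mul0rn addr0 !mulr0 subr0.
- rewrite mulr1 mul0rn addr0 -mulrnA -!natrM -natrB ?leq_mul2r ?leq_subr ?orbT //.
  by rewrite -mulnBl subKn 1?mulnC // ltnW.
Qed.

End TruncatedBinomial.

Lemma truncBinom_no_multiple_root (R : numFieldType) (k d : nat) (z : R) :
  (k < d)%N -> ~~ (('X - z%:P) ^+ 2 %| \poly_(j < k.+1) ('C(d, j))%:R).
Proof.
move=> ltkd; apply/negP => /sqr_dvdp_root_deriv /andP [/eqP Pz0 /eqP dPz0].
have /eqP := congr1 (horner^~ z) (@deriv_truncBinom R k d ltkd).
rewrite hornerM dPz0 mulr0 hornerD hornerN !hornerZ Pz0 mulr0 add0r hornerXn.
rewrite eq_sym oppr_eq0 mulf_eq0 pnatr_eq0 muln_eq0 subn_eq0 leqNgt ltkd /=.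
rewrite eqn0Ngt bin_gt0 (ltnW ltkd) /= expf_eq0 => /andP [_ /eqP z0].
by move: Pz0; rewrite z0 horner0_truncBinom; apply/eqP; rewrite oner_eq0.
Qed.

Theorem mainTheorem3 (k d : nat) : (1 <= k)%N -> (k < d)%N ->
  forall z : algC, ~ multiple_root (truncBinom k d) z.
Proof.
move=> _ ltkd z [_].
exact/negP/(@truncBinom_no_multiple_root _ k d z ltkd).
Qed.
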